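(* Let $\boldsymbol k$ be an algebraically closed field with $\operatorname{char}\boldsymbol k\neq 2$, let $V$ be a vector space over $\boldsymbol k$ of finite dimension $n$, and let $\mathcal M:=V^*\otimes V^*\otimes V$. Then there is a nonempty (dense) open subset $U\subseteq\mathcal M$ such that for every $m\in U$ the $\boldsymbol k$-algebra $\{V,m\}$ is simple and has trivial automorphism group.
   Context: For $m=\sum\ell\otimes\ell'\otimes v\in\mathcal M$, the $\boldsymbol k$-algebra $\{V,m\}$ is the (not necessarily associative) algebra structure on $V$ with product $ab:=\sum\ell(a)\ell'(b)v$. Simple means having no two-sided ideals other than $0$ and $V$. The automorphism group of $\{V,m\}$ is the stabilizer of $m$ in $\mathrm{GL}(V)$ acting naturally on $\mathcal M$. *)

From HB Require Import structures.
From mathcomp Require Import all_boot all_order all_algebra.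
From mathcomp Require Import mpoly.
Set Implicit Arguments. Unset Strict Implicit. Unset Printing Implicit Defensive.
Import GRing.Theory.
Local Open Scope ring_scope.

(* M = V^* (x) V^* (x) V is identified with k^(n*n*n) via coordinates:
   a point x : 'I_(n*n*n) -> k is the tensor m = sum_{i,j,l} c_{ijl} e_i^* (x) e_j^* (x) e_l
   with c_{ijl} = tcoef x i j l. *)
Definition tcoef (k : Type) (n : nat) (x : 'I_(n * n * n) -> k)
    (i j l : 'I_n) : k :=
  x (mxvec_index (mxvec_index i j) l).

Definition tmul (k : fieldType) (n : nat) (x : 'I_(n * n * n) -> k)
    (a b : 'rV[k]_n) : 'rV[k]_n :=
  \row_l \sum_(i < n) \sum_(j < n) a 0 i * b 0 j * tcoef x i j l.

Definition is_ideal (k : fieldType) (n : nat) (x : 'I_(n * n * n) -> k)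
    (I : 'M[k]_n) : Prop :=
  forall a b : 'rV[k]_n, (a <= I)%MS ->
    (tmul x a b <= I)%MS /\ (tmul x b a <= I)%MS.

Definition simple_alg (k : fieldType) (n : nat) (x : 'I_(n * n * n) -> k) : Prop :=
  forall I : 'M[k]_n, is_ideal x I -> I = 0 \/ row_full I.

Definition is_aut (k : fieldType) (n : nat) (x : 'I_(n * n * n) -> k)
    (g : 'M[k]_n) : Prop :=
  g \in unitmx /\
  forall a b : 'rV[k]_n, tmul x (a *m g) (b *m g) = tmul x a b *m g.

Definition trivial_aut (k : fieldType) (n : nat) (x : 'I_(n * n * n) -> k) : Prop :=
  forall g : 'M[k]_n, is_aut x g -> g = 1%:M.

Definition zariski_open (k : comRingType) (N : nat) (U : ('I_N -> k) -> Prop) : Prop :=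
  exists S : {mpoly k[N]} -> Prop,
    forall x, U x <-> exists p, S p /\ p.@[x] != 0.

From HB Require Import structures.
From mathcomp Require Import all_boot all_order all_algebra.
From mathcomp Require Import mpoly.
From mathcomp Require Import zify.
From Stdlib Require Import FunctionalExtensionality.

(* An automorphism g of {V,m} conjugates left multiplications: L_(ag) is
   g^-1 L_a g.  So g preserves the trace functional a |-> tr L_a and the trace
   form B(a,b) = tr (L_a L_b); when B is nondegenerate, g fixes the vector u
   representing the trace functional through B and commutes with L_u, and if
   the Krylov vectors u (L_u - 1)^k form a basis then g = 1.  A two-sided ideal
   is stable under every L_a, hence under the words
   L_(n-1)^(n-1-i) L_0^(n-1) L_(n-1)^j; if these span End V, the ideal is 0 or V.
   Both conditions are the nonvanishing of polynomials in the structure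
   constants (det B times a Krylov determinant, and a Gram determinant of the
   words).  Algebras built from the nilpotent shift matrix show that neither
   polynomial is zero, and over an infinite field their product is then nonzero
   somewhere. *)

Set Implicit Arguments. Unset Strict Implicit. Unset Printing Implicit Defensive.
Import GRing.Theory.
Local Open Scope ring_scope.

Definition krylovmx (R : comNzRingType) (n : nat) (v : 'rV[R]_n) (N : 'M[R]_n) :
  'M[R]_n := \matrix_(k < n) (v *m N ^+ k).

Lemma krylovmxE (R : comNzRingType) (n : nat) (v : 'rV[R]_n) N k l :
  krylovmx v N k l = (v *m N ^+ k) 0 l.
Proof. by rewrite -[in RHS](rowK (fun k => v *m N ^+ k) k) [in RHS]mxE. Qed.

Section UnitMatrices.
Variables (R : comUnitRingType) (n : nat).

Lemma krylovmx_fixed_eq1 (v : 'rV[R]_n) (N g : 'M[R]_n) :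
  krylovmx v N \in unitmx -> v *m g = v -> g *m N = N *m g -> g = 1%:M.
Proof.
move=> uK vg gN.
have gNk k : g *m N ^+ k = N ^+ k *m g by exact: commrX.
have Kg : krylovmx v N *m g = krylovmx v N.
  by apply/row_matrixP=> k; rewrite row_mul !rowK -mulmxA -gNk mulmxA vg.
by rewrite -[g]mul1mx -(mulVmx uK) -mulmxA Kg.
Qed.

Lemma adj_form_fixed (B g : 'M[R]_n) (t : 'cV[R]_n) :
  B \in unitmx -> g \in unitmx -> g *m B *m g^T = B -> g *m t = t ->
  t^T *m \adj B *m g = t^T *m \adj B.
Proof.
move=> uB ug gBg gt.
have Bg : B *m g^T = invmx g *m B by rewrite -{2}gBg -!mulmxA mulKmx.
have gBg_adj : g^T *m \adj B *m g = \adj B.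
  apply: (can_inj (mulKmx uB)); rewrite /= !mulmxA Bg -!mulmxA.
  by rewrite (mulmxA B) mul_mx_adj -scalar_mxC mulKmx.
by rewrite -{1}gt trmx_mul -!mulmxA (mulmxA g^T) gBg_adj.
Qed.

End UnitMatrices.

Definition grammx (R : comNzRingType) (J : finType) (p q : nat)
    (W : J -> 'M[R]_(p, q)) : 'M[R]_(p * q) :=
  \sum_s (mxvec (W s))^T *m mxvec (W s).

Lemma grammx_span (F : fieldType) (J : finType) p q (W : J -> 'M[F]_(p, q)) :
  grammx W \in unitmx -> forall A, exists c : J -> F, A = \sum_s c s *: W s.
Proof.
move=> uG A.
exists (fun s => (mxvec A *m invmx (grammx W) *m (mxvec (W s))^T) 0 0).
apply: (can_inj mxvecK); rewrite -{1}[mxvec A](mulmxKV uG) mulmx_sumr raddf_sum /=.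
apply: eq_bigr => s _; rewrite linearZ /= mulmxA.
by rewrite {1}[_ *m _^T]mx11_scalar mul_scalar_mx.
Qed.

Section Stability.
Variables (F : fieldType) (r n : nat) (V : 'M[F]_(r, n)).

Lemma stablemxZ a f : stablemx V f -> stablemx V (a *: f).
Proof. by move=> Vf; rewrite -scalemxAr scalemx_sub. Qed.

Lemma stablemxX f k : stablemx V f -> stablemx V (f ^+ k).
Proof.
move=> Vf; elim: k => [|k IH]; first exact: stablemxC.
by rewrite exprS; apply: stablemxM.
Qed.

Lemma stablemx_lincomb (J : finType) (W : J -> 'M[F]_n) (c : J -> F) :
  (forall s, stablemx V (W s)) -> stablemx V (\sum_s c s *: W s).
Proof.
move=> VW; apply: (big_ind (fun f => stablemx V f)) => //; first exact: stablemx0.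
  exact: stablemxD.
by move=> s _; apply/stablemxZ.
Qed.

Lemma stablemx_all_trivial :
  (forall f, stablemx V f) -> V = 0 \/ row_full V.
Proof.
move=> Vall; have [-> | nzV] := eqVneq V 0; [by left | right].
have [[i c] /= Vic] : exists ic : 'I_r * 'I_n, V ic.1 ic.2 != 0.
  apply/existsP; apply: contraNT nzV; rewrite negb_exists => /forallP V0.
  by apply/eqP/matrixP => i c; rewrite mxE; move: (V0 (i, c)) => /negPn/eqP.
rewrite -sub1mx; apply/row_subP => l; rewrite row1.
have -> : delta_mx 0 l = (V i c)^-1 *: row i (V *m delta_mx c l).
  apply/rowP => l'; rewrite row_mul !mxE (bigD1 c) //= !mxE eqxx /=.
  rewrite big1 ?addr0 ?mulKf // => j ne.
  by rewrite !mxE (negbTE ne) mulr0.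
exact/scalemx_sub/(submx_trans (row_sub i _))/Vall.
Qed.

End Stability.

Section MatrixUnits.
Variables (R : comNzRingType) (n : nat).

Lemma trmxX (A : 'M[R]_n) k : (A^T) ^+ k = (A ^+ k)^T.
Proof.
elim: k => [|k IH]; first by rewrite !expr0 trmx1.
by rewrite exprSr IH -[_ * _]/(_ *m _) -trmx_mul exprS.
Qed.

Lemma delta_form_entry (A : 'M[R]_n) i k :
  ((delta_mx 0 i : 'rV[R]_n) *m A *m (delta_mx 0 k : 'rV[R]_n)^T) 0 0 = A i k.
Proof. by rewrite trmx_delta -rowE -colE !mxE. Qed.

Lemma mul_mx_deltaE (A : 'M[R]_n) (p q r c : 'I_n) :
  (A *m delta_mx p q) r c = A r p * (c == q)%:R.
Proof.
rewrite mxE (bigD1 p) //= mxE eqxx /= big1 ?addr0 // => j ne.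
by rewrite mxE (negbTE ne) mulr0.
Qed.

Lemma mul_delta_mxE (A : 'M[R]_n) (p q r c : 'I_n) :
  (delta_mx p q *m A) r c = (r == p)%:R * A q c.
Proof.
rewrite mxE (bigD1 q) //= mxE eqxx andbT big1 ?addr0 // => j ne.
by rewrite mxE (negbTE ne) andbF mul0r.
Qed.

Lemma mxtrace_delta_mul i (A : 'M[R]_n) : \tr (delta_mx i i *m A) = A i i.
Proof.
rewrite /mxtrace (bigD1 i) //= mul_delta_mxE eqxx mul1r big1 ?addr0 // => j ne.
by rewrite mul_delta_mxE (negbTE ne) mul0r.
Qed.

Lemma sum_nat_indicator (q : nat) (F : nat -> R) :
  \sum_(p < n) ((p : nat) == q)%:R * F p = (q < n)%:R * F q.
Proof.
case: (ltnP q n) => h.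
  rewrite (bigD1 (Ordinal h)) //= eqxx mul1r big1 ?addr0 // => p ne.
  suff -> : ((p : nat) == q) = false by rewrite mul0r.
  by apply/negbTE; apply: contra ne => /eqP e; apply/eqP/val_inj.
rewrite big1 ?mul0r // => p _.
suff -> : ((p : nat) == q) = false by rewrite mul0r.
by apply/negbTE; rewrite neq_ltn (leq_trans (ltn_ord p) h).
Qed.

Lemma grammx_matrix_units :
  grammx (fun s : 'I_n * 'I_n => delta_mx s.1 s.2) = 1%:M :> 'M[R]_(n * n).
Proof.
rewrite /grammx mx1_sum_delta (reindex _ (curry_mxvec_bij n n)) /=.
by apply: eq_bigr => -[i j] _; rewrite mxvec_delta trmx_delta mul_delta_mx.
Qed.

End MatrixUnits.

Section StructureMatrices.
Variables (R : comNzRingType) (n : nat) (y : 'I_(n * n * n) -> R).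

Definition lmx (i : 'I_n) : 'M[R]_n := \matrix_(j, l) tcoef y i j l.
Definition lmulmx (a : 'rV[R]_n) : 'M[R]_n := \sum_i a 0 i *: lmx i.
Definition trace_vec : 'cV[R]_n := \col_i \tr (lmx i).
Definition trace_form : 'M[R]_n := \matrix_(i, k) \tr (lmx i *m lmx k).
(* The adjugate rather than the inverse keeps trace_dual polynomial in y. *)
Definition trace_dual : 'rV[R]_n := trace_vec^T *m \adj trace_form.
Definition aut_disc : R :=
  \det trace_form * \det (krylovmx trace_dual (lmulmx trace_dual - 1%:M)).

End StructureMatrices.

Section Words.
Variables (R : comNzRingType) (m : nat).
Local Notation n := m.+1.
Variable y : 'I_(n * n * n) -> R.

Definition word (s : 'I_n * 'I_n) : 'M[R]_n :=
  lmx y ord_max ^+ (m - s.1) *m lmx y ord0 ^+ m *m lmx y ord_max ^+ s.2.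
Definition simple_disc : R := \det (grammx word).

End Words.

Section MapStructure.
Variables (R S : comNzRingType) (f : {rmorphism R -> S}).

Lemma map_mxtrace n (A : 'M[R]_n) : f (\tr A) = \tr (map_mx f A).
Proof. by rewrite /mxtrace rmorph_sum; apply: eq_bigr => i _; rewrite mxE. Qed.

Lemma map_krylovmx n (v : 'rV[R]_n) N :
  map_mx f (krylovmx v N) = krylovmx (map_mx f v) (map_mx f N).
Proof.
by apply/row_matrixP=> k; rewrite -map_row !rowK map_mxM rmorphXn.
Qed.

Lemma map_grammx (J : finType) p q (W : J -> 'M[R]_(p, q)) :
  map_mx f (grammx W) = grammx (fun s => map_mx f (W s)).
Proof.
rewrite /grammx raddf_sum /=; apply: eq_bigr => s _.
by rewrite map_mxM -map_trmx map_mxvec.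
Qed.

Variables (n : nat) (y : 'I_(n * n * n) -> R).

Lemma map_lmx i : map_mx f (lmx y i) = lmx (f \o y) i.
Proof. by apply/matrixP=> j l; rewrite !mxE. Qed.

Lemma map_lmulmx a : map_mx f (lmulmx y a) = lmulmx (f \o y) (map_mx f a).
Proof.
rewrite /lmulmx raddf_sum /=; apply: eq_bigr => i _.
by rewrite map_mxZ map_lmx mxE.
Qed.

Lemma map_trace_form : map_mx f (trace_form y) = trace_form (f \o y).
Proof. by apply/matrixP=> i k; rewrite !mxE map_mxtrace map_mxM !map_lmx. Qed.

Lemma map_trace_dual : map_mx f (trace_dual y) = trace_dual (f \o y).
Proof.
rewrite /trace_dual map_mxM -map_trmx map_mx_adj map_trace_form; congr (_^T *m _).
by apply/matrixP=> i j; rewrite !mxE map_mxtrace map_lmx.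
Qed.

Lemma map_aut_disc : f (aut_disc y) = aut_disc (f \o y).
Proof.
rewrite /aut_disc rmorphM -!det_map_mx map_trace_form map_krylovmx.
by rewrite map_mxB map_mx1 map_lmulmx map_trace_dual.
Qed.

End MapStructure.

Lemma map_simple_disc (R S : comNzRingType) (f : {rmorphism R -> S}) m
    (y : 'I_(m.+1 * m.+1 * m.+1) -> R) :
  f (simple_disc y) = simple_disc (f \o y).
Proof.
rewrite /simple_disc -det_map_mx map_grammx; congr (\det (grammx _)).
apply: functional_extensionality => s.
by rewrite /word !map_mxM !rmorphXn /= !map_lmx.
Qed.

Section Automorphisms.
Variables (K : fieldType) (n : nat) (x : 'I_(n * n * n) -> K).

Lemma tmulE a b : tmul x a b = b *m lmulmx x a.
Proof.
apply/rowP=> l; rewrite !mxE exchange_big /=; apply: eq_bigr => j _.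
rewrite /lmulmx summxE mulr_sumr; apply: eq_bigr => i _.
by rewrite !mxE mulrCA mulrA.
Qed.

Lemma trace_vecE a : (a *m trace_vec x) 0 0 = \tr (lmulmx x a).
Proof.
rewrite /lmulmx raddf_sum /= mxE; apply: eq_bigr => i _.
by rewrite mxtraceZ !mxE.
Qed.

Lemma trace_formE a b :
  (a *m trace_form x *m b^T) 0 0 = \tr (lmulmx x a *m lmulmx x b).
Proof.
rewrite /lmulmx mulmx_suml; under eq_bigr do rewrite mulmx_sumr.
rewrite raddf_sum /=; under eq_bigr do rewrite raddf_sum /=.
rewrite mxE; under [LHS]eq_bigr do rewrite !mxE mulr_suml.
rewrite exchange_big /=; apply: eq_bigr => i _; apply: eq_bigr => k _.
by rewrite -scalemxAl -scalemxAr !mxtraceZ mxE -mulrA [_ * b 0 k]mulrC.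
Qed.

Variable g : 'M[K]_n.
Hypothesis aut_g : is_aut x g.

Let unit_g : g \in unitmx. Proof. by case: aut_g. Qed.

Lemma is_aut_lmulmx a : lmulmx x (a *m g) = invmx g *m lmulmx x a *m g.
Proof.
case: aut_g => _ gM; rewrite -mulmxA; apply: (canRL (mulKmx unit_g)).
by apply/eqP/mulmxP => b; rewrite !mulmxA -!tmulE gM.
Qed.

Lemma mxtrace_conj (A : 'M[K]_n) : \tr (invmx g *m A *m g) = \tr A.
Proof. by rewrite mxtrace_mulC mulKVmx. Qed.

Lemma is_aut_trace_vec : g *m trace_vec x = trace_vec x.
Proof.
apply/eqP/mulmxP => a; apply/rowP => i; rewrite ord1.
by rewrite mulmxA trace_vecE is_aut_lmulmx mxtrace_conj -trace_vecE.
Qed.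

Lemma is_aut_trace_form : g *m trace_form x *m g^T = trace_form x.
Proof.
apply/matrixP => i k; rewrite -!(delta_form_entry _ i k).
rewrite !mulmxA -(mulmxA _ g^T) -trmx_mul trace_formE !is_aut_lmulmx.
rewrite -!mulmxA mulKVmx // (mulmxA (lmulmx _ _)) mulmxA mxtrace_conj.
by rewrite -trace_formE mulmxA.
Qed.

Lemma is_aut_trace_dual :
  \det (trace_form x) != 0 -> trace_dual x *m g = trace_dual x.
Proof.
move=> detB; apply: adj_form_fixed => //; last exact: is_aut_trace_vec.
  by rewrite unitmxE unitfE.
exact: is_aut_trace_form.
Qed.

End Automorphisms.

Lemma trivial_aut_of_disc (K : fieldType) n (x : 'I_(n * n * n) -> K) :
  aut_disc x != 0 -> trivial_aut x.
Proof.
rewrite mulf_eq0 negb_or => /andP[detB detK] g aut_g.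
have ug : g \in unitmx by case: aut_g.
have fix_u := is_aut_trace_dual aut_g detB.
apply: (krylovmx_fixed_eq1 (N := lmulmx x (trace_dual x) - 1%:M) _ fix_u).
  by rewrite unitmxE unitfE.
rewrite mulmxBl mulmxBr mul1mx mulmx1; congr (_ - _).
by rewrite -{1}fix_u (is_aut_lmulmx aut_g) mulmxA mulKVmx.
Qed.

Section Ideals.
Variables (K : fieldType) (n : nat) (x : 'I_(n * n * n) -> K).

Lemma lmulmx_delta i : lmulmx x (delta_mx 0 i) = lmx x i.
Proof.
rewrite /lmulmx (bigD1 i) //= mxE !eqxx scale1r big1 ?addr0 // => j ne.
by rewrite mxE eqxx (negbTE ne) scale0r.
Qed.

Lemma is_ideal_stablemx_lmx (I : 'M[K]_n) i :
  is_ideal x I -> stablemx I (lmx x i).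
Proof.
move=> idI; apply/row_subP => r; rewrite row_mul.
by have [_] := idI _ (delta_mx 0 i) (row_sub r I); rewrite tmulE lmulmx_delta.
Qed.

End Ideals.

Lemma simple_alg_of_disc (K : fieldType) m (x : 'I_(m.+1 * m.+1 * m.+1) -> K) :
  simple_disc x != 0 -> simple_alg x.
Proof.
move=> detG I idI; apply: stablemx_all_trivial => A.
have unit_gram : grammx (word x) \in unitmx by rewrite unitmxE unitfE.
have [c ->] := grammx_span unit_gram A.
apply: stablemx_lincomb => s.
by apply: stablemxM; [apply: stablemxM|]; apply/stablemxX/is_ideal_stablemx_lmx.
Qed.

Section StructureOf.
Variables (R : comNzRingType) (n : nat).

Definition structure_of (L : 'I_n -> 'M[R]_n) : 'I_(n * n * n) -> R :=
  fun r => mxvec (\matrix_(p, l) mxvec (\matrix_(i, j) L i j l) 0 p) 0 r.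

Lemma lmx_structure_of L i : lmx (structure_of L) i = L i.
Proof.
by apply/matrixP=> j l; rewrite mxE /tcoef /structure_of !mxvecE !mxE mxvecE mxE.
Qed.

End StructureOf.

Section Shift.
Variables (R : comNzRingType) (n : nat).

Definition shiftmx : 'M[R]_n := \matrix_(j, l) ((l : nat) == j.+1)%:R.

Lemma shiftmxX a : shiftmx ^+ a = \matrix_(j, l) ((l : nat) == (j + a)%N)%:R.
Proof.
elim: a => [|a IH].
  by apply/matrixP=> j l; rewrite expr0 !mxE addn0 eq_sym.
rewrite exprSr -[_ * _]/(_ *m _) IH; apply/matrixP=> j l; rewrite !mxE.
under eq_bigr do rewrite !mxE.
rewrite (sum_nat_indicator _ _ (fun p => ((l : nat) == p.+1)%:R)) addnS.
case: eqP => [e|]; last by rewrite mulr0.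
by rewrite (ltn_trans _ (ltn_ord l)) ?e ?mul1r.
Qed.

Lemma mxtrace_shiftmxX a : (0 < a)%N -> \tr (shiftmx ^+ a) = 0.
Proof.
move=> a_gt0; rewrite /mxtrace big1 // => i _; rewrite shiftmxX mxE.
by rewrite -{1}[i : nat]addn0 eqn_add2l eq_sym (gtn_eqF a_gt0).
Qed.

End Shift.

Section Witnesses.
Variables (R : comNzRingType) (m : nat).
Local Notation n := m.+1.
Local Notation shiftmx := (@shiftmx R n).

(* With N the shift, L_i = E_ii + [i = 0] N has trace form 1 and u = (1,...,1),
   and L_u - 1 = N, whose Krylov matrix from u is unitriangular. *)
Definition aut_witness (i : 'I_n) : 'M[R]_n :=
  delta_mx i i + (i == ord0)%:R *: shiftmx.

Local Notation y1 := (structure_of aut_witness).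

Lemma trace_vec_aut_witness : trace_vec y1 = const_mx 1.
Proof.
apply/matrixP=> i j; rewrite !mxE lmx_structure_of mxtraceD mxtraceZ.
rewrite -[shiftmx]expr1 mxtrace_shiftmxX // mulr0 addr0.
by rewrite -[delta_mx i i]mulmx1 mxtrace_delta_mul mxE eqxx.
Qed.

Lemma trace_form_aut_witness : trace_form y1 = 1%:M.
Proof.
apply/matrixP=> i k; rewrite !mxE !lmx_structure_of mulmxDl !mulmxDr !mxtraceD.
rewrite -!scalemxAl -!scalemxAr !mxtraceZ.
rewrite -[shiftmx *m shiftmx]expr2 mxtrace_shiftmxX //.
rewrite (mxtrace_mulC shiftmx) !mxtrace_delta_mul !mxE.
by rewrite !ltn_eqF // !mulr0 !addr0 eq_sym andbb.
Qed.

Lemma trace_dual_aut_witness : trace_dual y1 = const_mx 1.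
Proof.
rewrite /trace_dual trace_form_aut_witness adj1 mulmx1.
by rewrite trace_vec_aut_witness trmx_const.
Qed.

Lemma lmulmx_aut_witness : lmulmx y1 (const_mx 1) - 1%:M = shiftmx.
Proof.
rewrite /lmulmx; under eq_bigr do rewrite mxE scale1r lmx_structure_of.
rewrite big_split /= -mx1_sum_delta addrC addrK.
rewrite (bigD1 ord0) //= scale1r big1 ?addr0 // => i ne.
by rewrite (negbTE ne) scale0r.
Qed.

Lemma const1_shiftmxX k :
  (const_mx 1 : 'rV[R]_n) *m shiftmx ^+ k = \row_l (k <= l)%:R.
Proof.
apply/rowP => l; rewrite shiftmxX !mxE.
under eq_bigr do rewrite !mxE mul1r.
transitivity (\sum_(j < n) ((j : nat) == (l - k)%N)%:R * (k <= l)%:R : R).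
  apply: eq_bigr => j _; case: (leqP k l) => kl; rewrite ?mulr1 ?mulr0.
    by congr _%:R; apply/eqP/eqP; lia.
  by case: eqP => // ?; lia.
rewrite (sum_nat_indicator _ _ (fun=> (k <= l)%:R)).
by rewrite (leq_ltn_trans (leq_subr k l) (ltn_ord l)) mul1r.
Qed.

Lemma aut_disc_witness : aut_disc y1 = 1.
Proof.
rewrite /aut_disc trace_form_aut_witness det1 mul1r.
rewrite trace_dual_aut_witness lmulmx_aut_witness -det_tr det_trig.
  by rewrite big1 // => i _; rewrite mxE krylovmxE const1_shiftmxX mxE leqnn.
by apply/is_trig_mxP=> i j lt; rewrite mxE krylovmxE const1_shiftmxX mxE leqNgt lt.
Qed.

(* L_(n-1) = N and L_0 = N^T make the words exactly the matrix units. *)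
Definition simple_witness (i : 'I_n) : 'M[R]_n :=
  if i == ord_max then shiftmx else shiftmx^T.

Local Notation y2 := (structure_of simple_witness).

Lemma trshiftmx_max : shiftmx^T ^+ m = delta_mx ord_max ord0.
Proof.
apply/matrixP=> r q; rewrite trmxX !mxE shiftmxX mxE; congr (_%:R).
have := ltn_ord r; have := ltn_ord q.
by case: r q => [r hr] [q hq] /= *; rewrite -!val_eqE /=; lia.
Qed.

Lemma word_simple_witness s : word y2 s = delta_mx s.1 s.2.
Proof.
have max_shift : lmx y2 ord_max = shiftmx.
  by rewrite lmx_structure_of /simple_witness eqxx.
have min_pow : lmx y2 ord0 ^+ m = delta_mx ord_max ord0.
  rewrite lmx_structure_of /simple_witness -trshiftmx_max.
  by case: eqP => // /(congr1 val) /= m0; rewrite -m0 !expr0.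
case: s => i j; rewrite /word max_shift min_pow /=.
have -> : shiftmx ^+ (m - i) *m delta_mx ord_max ord0 = delta_mx i ord0 :> 'M_n.
  apply/matrixP=> r c; rewrite mul_mx_deltaE shiftmxX !mxE.
  have -> : ((ord_max : 'I_n) == (r + (m - i))%N :> nat) = (r == i).
    by rewrite -val_eqE /=; have := ltn_ord i; lia.
  by case: (r == i); case: (c == ord0); rewrite ?mul1r ?mul0r.
apply/matrixP=> r c; rewrite mul_delta_mxE shiftmxX !mxE /= add0n.
by case: (r == i); rewrite ?mul1r ?mul0r.
Qed.

Lemma simple_disc_witness : simple_disc y2 = 1.
Proof.
rewrite /simple_disc; have -> : word y2 = fun s => delta_mx s.1 s.2.
  by apply: functional_extensionality; exact: word_simple_witness.
by rewrite grammx_matrix_units det1.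
Qed.

End Witnesses.

Lemma horner_mmap_polyC (k : fieldType) N (h : 'I_N -> {poly k})
    (p : {mpoly k[N]}) t :
  (mmap polyC h p).[t] = p.@[fun r => (h r).[t]].
Proof.
rewrite /mmap mevalE horner_sum; apply: eq_bigr => mm _.
rewrite hornerCM -horner_evalE rmorph_prod /=; congr (_ * _).
by apply: eq_bigr => r _; rewrite rmorphXn.
Qed.

Lemma mpoly_mul_nonvanishing (k : closedFieldType) N (p q : {mpoly k[N]}) x1 x2 :
  p.@[x1] != 0 -> q.@[x2] != 0 -> exists x, (p * q).@[x] != 0.
Proof.
move=> px1 qx2.
pose line t r := x1 r + (x2 r - x1 r) * t.
have line0 : line 0 =1 x1 by move=> r; rewrite /line mulr0 addr0.
have line1 : line 1 =1 x2 by move=> r; rewrite /line mulr1 addrC subrK.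
have restrict s : {P : {poly k} | forall t, P.[t] = s.@[line t]}.
  exists (mmap polyC (fun r => (x1 r)%:P + (x2 r - x1 r)%:P * 'X) s) => t.
  by rewrite horner_mmap_polyC; apply: meval_eq => r; rewrite !hornerE.
have [P PE] := restrict p; have [Q QE] := restrict q.
have P_neq0 : P != 0.
  by apply: contra_neq px1 => P0; rewrite -(meval_eq p line0) -PE P0 horner0.
have Q_neq0 : Q != 0.
  by apply: contra_neq qx2 => Q0; rewrite -(meval_eq q line1) -QE Q0 horner0.
have [t PQt] := closed_nonrootP (P * Q) (mulf_neq0 P_neq0 Q_neq0).
by exists (line t); rewrite mevalM -PE -QE -hornerM.
Qed.

Lemma exists_simple_rigid_mpoly (k : closedFieldType) n :
  exists P : {mpoly k[n * n * n]},
    (exists x, P.@[x] != 0) /\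
    forall x, P.@[x] != 0 -> simple_alg x /\ trivial_aut x.
Proof.
case: n => [|m].
  exists 1; split; first by exists (fun=> 0); rewrite meval1 oner_neq0.
  by move=> x _; split=> [I _ | g _]; [left | ]; apply/matrixP => -[].
pose X r : {mpoly k[m.+1 * m.+1 * m.+1]} := 'X_r.
have evalX x : meval x \o X = x.
  by apply: functional_extensionality => r; rewrite /= mevalXU.
exists (aut_disc X * simple_disc X); split.
  apply: (mpoly_mul_nonvanishing (x1 := structure_of (@aut_witness k m))
                                 (x2 := structure_of (@simple_witness k m))).
    by rewrite map_aut_disc evalX aut_disc_witness oner_neq0.
  by rewrite map_simple_disc evalX simple_disc_witness oner_neq0.
move=> x; rewrite mevalM map_aut_disc map_simple_disc !evalX.
rewrite mulf_eq0 negb_or => /andP[aut_x simple_x].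
by split; [exact: simple_alg_of_disc | exact: trivial_aut_of_disc].
Qed.

Theorem theorem4 (k : closedFieldType) (n : nat) :
  (2 \notin [pchar k])%N ->
  exists U : ('I_(n * n * n) -> k) -> Prop,
    zariski_open U /\ (exists x, U x) /\
    forall x, U x -> simple_alg x /\ trivial_aut x.
Proof.
(* The argument works in every characteristic. *)
move=> _; have [P [[x0 Px0] P_good]] := exists_simple_rigid_mpoly k n.
exists (fun x => P.@[x] != 0); split; last by split; [exists x0 | ].
by exists (eq P) => x; split=> [Px | [_ [<- //]]]; exists P.
Qed.
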